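(* Let $B$ be a cubic 3-connected graph with no 3-blockades, and let $G$ be the graph obtained from $B$ by replacing each vertex $u$ by a triangle $T_u$ (as described in the context). (a1) Let $P$ be any $\Lambda$-factor of $G$. Then (a1.1) $\vec F(P,G)$ is a cycle-dipacking in $B$; (a1.2) $|K\cap E(P)|\in\{0,2\}$ for every 3-blockade $K$ of $G$; (a1.3) $E(T)\cap E(P)\neq\emptyset$ for every triangle $T$ of $G$. (a2) For every cycle-dipacking $\vec Q$ in $B$, $G$ has a $\Lambda$-factor $P$ with $\vec F(P,G)=\vec Q$.
   Context: Graphs are finite and simple. A $\Lambda$-factor of a graph is a spanning subgraph each of whose components is a 3-vertex path. An edge cut of a cubic graph that is a matching is called a blockade; a $k$-blockade is a blockade with $k$ edges. Replacing each vertex by a triangle: for each $u\in V(B)$ take a triangle $T_u$ whose three vertices are in bijection with the three edges of $B$ at $u$; for each edge $uv\in E(B)$ add an edge $\alpha(uv)$ joining the vertex of $T_u$ corresponding to $uv$ with the vertex of $T_v$ corresponding to $uv$. Let $E'(G)=\{\alpha(e):e\in E(B)\}$. For a $\Lambda$-factor $P$ of $G$, $F(P,G)$ is the subgraph of $B$ formed by the edges $uv$ with $\alpha(uv)\in E(P)$ (and their ends); $\vec F(P,G)$ is obtained by directing each such edge $uv$ from $u$ to $v$ if the component $L$ of $P$ containing $\alpha(uv)$ satisfies $|V(L)\cap V(T_u)|=1$. A cycle-dipacking of $B$ is a directed graph obtained from a subgraph of $B$ all of whose components are cycles by orienting each cycle as a directed cycle. *)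

From mathcomp Require Import all_boot.
Set Implicit Arguments. Unset Strict Implicit. Unset Printing Implicit Defensive.

Section Defs.
Variable T : finType.

(** A simple graph on T is a symmetric irreflexive relation [e]. *)

Definition edges (e : rel T) : {set {set T}} :=
  [set E : {set T} | [exists x, exists y, e x y && (E == [set x; y])]].

Definition cubic (e : rel T) : Prop := forall u, #|[set v | e u v]| = 3.

Definition connected_minus (e : rel T) (S : {set T}) : Prop :=
  forall x y, x \notin S -> y \notin S ->
    connect [rel a b | [&& e a b, a \notin S & b \notin S]] x y.

Definition k_connected (k : nat) (e : rel T) : Prop :=
  k < #|T| /\ forall S : {set T}, #|S| < k -> connected_minus e S.

Definition edge_cut (e : rel T) (X : {set T}) : {set {set T}} :=
  [set E in edges e | #|E :&: X| == 1].

Definition is_matching (K : {set {set T}}) : Prop :=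
  forall E1 E2, E1 \in K -> E2 \in K -> E1 != E2 -> [disjoint E1 & E2].

Definition blockade (e : rel T) (K : {set {set T}}) : Prop :=
  (exists X : {set T}, K = edge_cut e X) /\ is_matching K.

Definition triangle (e : rel T) (Tr : {set T}) : Prop :=
  #|Tr| = 3 /\ forall x y, x \in Tr -> y \in Tr -> x != y -> e x y.

Definition subrel (P : {set {set T}}) : rel T := fun x y => [set x; y] \in P.
Definition comp (P : {set {set T}}) (x : T) : {set T} :=
  [set y | connect (subrel P) x y].

Definition Lambda_factor (e : rel T) (P : {set {set T}}) : Prop :=
  P \subset edges e /\
  forall x, exists a b c,
    [/\ comp P x = [set a; b; c], [&& a != b, b != c & a != c],
        subrel P a b, subrel P b c & ~~ subrel P a c].

(** Cycle-dipacking: a set D of arcs (ordered pairs) of e, such that the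
    arcs at every vertex they touch form a directed cycle, i.e. D is the
    union of vertex-disjoint cycles of e, each oriented as a directed cycle. *)
Definition cycle_dipacking (e : rel T) (D : {set T * T}) : Prop :=
  (forall x y, (x, y) \in D -> e x y) /\
  forall x, (exists y, ((x, y) \in D) || ((y, x) \in D)) ->
    exists s : seq T, [/\ uniq s, 3 <= size s, x \in s &
      forall y, y \in s -> forall z,
        (((y, z) \in D) = (z == next s y)) /\ (((z, y) \in D) = (z == prev s y))].

End Defs.

(** Replacing each vertex of B = (T, e) by a triangle.
    The vertex of T_u corresponding to the edge uv is the pair (u, v). *)
Definition Vtri (T : finType) (e : rel T) := {p : T * T | e p.1 p.2}.

Section Tri.
Variables (T : finType) (e : rel T).

(** Adjacency of G: (u,v)~(u,w) for v<>w (edges of T_u), and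
    (u,v)~(v,u) (the edge alpha(uv)). *)
Definition Gadj : rel (Vtri e) := fun x y =>
  (((val x).1 == (val y).1) && (x != y)) || (val y == ((val x).2, (val x).1)).

Definition Tri (u : T) : {set Vtri e} := [set x : Vtri e | (val x).1 == u].

Definition alpha_in (P : {set {set Vtri e}}) (x : Vtri e) : bool :=
  [exists y : Vtri e, (val y == ((val x).2, (val x).1)) && ([set x; y] \in P)].

(** The directed graph vec F(P,G), as its set of arcs (u,v). *)
Definition Fdir (P : {set {set Vtri e}}) : {set T * T} :=
  [set p : T * T | [exists x : Vtri e,
     [&& val x == p, alpha_in P x & #|comp P x :&: Tri (val x).1| == 1]]].

End Tri.

From Pilot Require Import Defs.
From mathcomp Require Import all_boot.
Set Implicit Arguments. Unset Strict Implicit. Unset Printing Implicit Defensive.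

(** The vertex of T_u associated with the
    edge uv is the pair (u, v); its alpha-partner is (v, u).

    A component
    containing an alpha-edge x--x' has its third vertex in the triangle of x
    or of x'; the end lying alone in its triangle is "leaving", the other one
    "entering", and alpha-partners swap the two kinds.  Locally, a triangle
    has at most one entering vertex, and a triangle with an entering vertex
    also has a leaving one.  Since there are as many entering as leaving
    vertices, the map sending an entering vertex to a leaving vertex of its
    triangle is a bijection, so every vertex u of B carries either no
    alpha-edge of P or exactly one leaving and one entering vertex.  Hence
    u |-> (far end of its leaving vertex) is an injective partial successor
    whose orbits are the directed cycles of F(P,G); they have length >= 3
    (a1.1).  A blockade of G is
    a union of triangles, its P-edges are alpha-edges whose inner ends are
    equally often leaving and entering, so there is an even number of them
    (a1.2).
    (a2) Conversely, a cycle-dipacking D is realised by the alpha-edges of its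
    arcs together with, in each triangle, the edges at a "hub" vertex: the
    vertex towards the predecessor on D joined to the vertex not towards the
    successor, or a fixed vertex joined to the two others when u is off D. *)

Lemma card_seq_setI (T : finType) (s : seq T) (A : {set T}) : uniq s ->
  #|[set x in s] :&: A| = count [in A] s.
Proof.
move=> us; rewrite -size_filter -(card_uniqP (filter_uniq _ us)).
by apply: eq_card => x; rewrite !inE mem_filter andbC.
Qed.

Lemma card_set3I (T : finType) (a b c : T) (A : {set T}) : uniq [:: a; b; c] ->
  #|[set a; b; c] :&: A| = (a \in A) + (b \in A) + (c \in A).
Proof.
move=> u; have -> : [set a; b; c] = [set x in [:: a; b; c]].
  by apply/setP => x; rewrite !inE orbA.
by rewrite card_seq_setI //= addn0 addnA.
Qed.

Lemma card_set2I (T : finType) (a b : T) (A : {set T}) : a != b ->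
  #|[set a; b] :&: A| = (a \in A) + (b \in A).
Proof.
move=> nab; have -> : [set a; b] = [set x in [:: a; b]] by apply/setP => x; rewrite !inE.
by rewrite card_seq_setI /= ?inE ?nab // addn0.
Qed.

Lemma card3_set (T : finType) (A : {set T}) : #|A| = 3 ->
  exists x y z, uniq [:: x; y; z] /\ A = [set x; y; z].
Proof.
move=> h; have : 0 < #|A| by rewrite h.
case/card_gt0P => x hx.
have : #|A :\ x| == 2 by move: h; rewrite (cardsD1 x) hx add1n => -[->].
case/cards2P => y [z [nyz E]].
have : y \in A :\ x by rewrite E !inE eqxx.
have : z \in A :\ x by rewrite E !inE eqxx orbT.
rewrite !inE => /andP[nzx _] /andP[nyx _].
exists x, y, z; split; first by rewrite /= !inE !negb_or nyz eq_sym nyx eq_sym nzx.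
by rewrite -(setD1K hx) E; apply/setP => w; rewrite !inE orbA.
Qed.

Lemma set3_cases (T : finType) (a b c z : T) :
  z \in [set a; b; c] -> [\/ z = a, z = b | z = c].
Proof. by rewrite !inE => /orP[/orP[]|]/eqP->; [constructor 1|constructor 2|constructor 3]. Qed.

Lemma set2_inj (T : finType) (a b x y : T) : [set a; b] = [set x; y] ->
  (a = x /\ b = y) \/ (a = y /\ b = x).
Proof.
move=> E.
have hx : x \in [set a; b] by rewrite E set21.
have hy : y \in [set a; b] by rewrite E set22.
have /set2P[] : a \in [set x; y] by rewrite -E set21.
all: have /set2P[] : b \in [set x; y] by rewrite -E set22.
all: move=> hb ha; subst a b; try by [left | right].
- by move: hy => /set2P[] ->; left.
- by move: hx => /set2P[] ->; right.
Qed.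

Lemma next_prev_neq (T : eqType) (s : seq T) (x : T) :
  uniq s -> 3 <= size s -> x \in s -> next s x != prev s x.
Proof.
move=> U hs hx.
rewrite -(next_rot (index x s) U) -(prev_rot (index x s) U).
have U' := U; rewrite -(rot_uniq (index x s)) in U'.
have S' := hs; rewrite -(size_rot (index x s)) in S'.
rewrite (rot_index hx) in U' S' *.
move: (drop _ _ ++ _) U' S' => l.
case: l => [|a [|b t]] // U' _.
have hnx : x \notin a :: b :: t by case/andP: U'.
have hna : a \notin b :: t by case/andP: U' => _ /andP[].
rewrite prev_nth mem_head (memNindex hnx).
have := nth_last x (x :: a :: b :: t); rewrite /= => ->.
rewrite eqxx; apply: contraNneq hna => ->; exact: mem_last.
Qed.

Section TriangleReplacement.
Variables (T : finType) (e : rel T).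
Hypotheses (e_sym : symmetric e) (e_irr : irreflexive e) (e_cubic : cubic e).

Local Notation V := (Vtri e).
Local Notation base x := (val x).1.
Local Notation target x := (val x).2.

Lemma vtri_edge (x : V) : e (base x) (target x). Proof. exact: valP x. Qed.

Lemma vtri_pair (x : V) : val x = (base x, target x).
Proof. exact: surjective_pairing. Qed.

Lemma vtri_eq (x y : V) : base x = base y -> target x = target y -> x = y.
Proof. by move=> h1 h2; apply: val_inj; rewrite vtri_pair [val y]vtri_pair h1 h2. Qed.

Lemma vtri_of_edge (u v : T) : e u v -> exists x : V, val x = (u, v).
Proof. by move=> h; exists (exist _ (u, v) h). Qed.

Lemma base_neq_target (x : V) : base x != target x.
Proof. by apply: contraTneq (vtri_edge x) => ->; rewrite e_irr. Qed.

Definition cross (x : V) : V :=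
  exist (fun p : T * T => e p.1 p.2) (target x, base x) (etrans (e_sym _ _) (vtri_edge x)).

Lemma crossK : involutive cross. Proof. by move=> x; apply: vtri_eq. Qed.
Lemma cross_inj : injective cross. Proof. exact: inv_inj crossK. Qed.

Lemma cross_neq (x : V) : cross x != x.
Proof. by apply/eqP => /(congr1 (fun z : V => (val z).1)) /= h; move: (base_neq_target x); rewrite h eqxx. Qed.

Lemma cross_other_tri (x y : V) : base x = base y -> cross x != y.
Proof. by move=> h; apply/eqP => hh; move: (base_neq_target x); rewrite h -hh /= eqxx. Qed.

Lemma GadjP (x y : V) : Gadj x y -> x != y /\ (base x = base y \/ y = cross x).
Proof.
rewrite /Gadj => /orP[/andP[/eqP h1 h2] | /eqP h]; first by split; [|left].
have hy : y = cross x by apply: val_inj.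
by split; [rewrite hy eq_sym cross_neq | right].
Qed.

Lemma Gadj_cross (x : V) : Gadj x (cross x). Proof. by rewrite /Gadj eqxx orbT. Qed.

Lemma Gadj_tri (x y : V) : base x = base y -> x != y -> Gadj x y.
Proof. by move=> h1 h2; rewrite /Gadj h1 eqxx h2. Qed.

Lemma in_Tri (x : V) u : (x \in Tri e u) = (base x == u). Proof. by rewrite inE. Qed.

(** Cubicity: each triangle has exactly three vertices. *)
Lemma tri_third (x y : V) : base x = base y -> x != y -> exists t : V,
  [/\ base t = base x, t != x, t != y &
      forall w : V, base w = base x -> [|| w == x, w == y | w == t]].
Proof.
move=> hxy nxy; set N := [set v | e (base x) v].
have hx2 : target x \in N by rewrite inE vtri_edge.
have hy2 : target y \in N by rewrite inE hxy vtri_edge.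
have n2 : target x != target y by apply: contra nxy => /eqP h; apply/eqP; apply: vtri_eq.
have : #|N :\: [set target x; target y]| == 1.
  rewrite cardsD (setIidPr _) ?cards2 ?n2 ?e_cubic //.
  by apply/subsetP => z /set2P[]->.
case/cards1P => z hz.
have : z \in N :\: [set target x; target y] by rewrite hz set11.
rewrite !inE => /andP[/norP[hzx hzy] ez].
exists (exist _ (base x, z) ez); split => //.
- by apply: contra hzx => /eqP <-.
- by apply: contra hzy => /eqP <-.
move=> w hw; have hwN : target w \in N by rewrite inE -hw vtri_edge.
case: (eqVneq (target w) (target x)) => [h1|h1]; first by rewrite (vtri_eq hw h1) eqxx.
case: (eqVneq (target w) (target y)) => [h2|h2].
  by rewrite (vtri_eq (etrans hw hxy) h2) eqxx orbT.
have : target w \in N :\: [set target x; target y] by rewrite in_setD hwN !inE negb_or h1 h2.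
by rewrite hz inE => /eqP h3; rewrite (@vtri_eq w (exist _ (base x, z) ez) hw h3) eqxx !orbT.
Qed.

Lemma tri_other (x : V) : exists y : V, base y = base x /\ y != x.
Proof.
have hx : target x \in [set v | e (base x) v] by rewrite inE vtri_edge.
have : 0 < #|[set v | e (base x) v] :\ target x|.
  by move: (e_cubic (base x)); rewrite (cardsD1 (target x)) hx add1n => -[->].
case/card_gt0P => v; rewrite !inE => /andP[nv ev].
exists (exist _ (base x, v) ev); split => //.
by apply/negP => /eqP hh; move: nv; rewrite -hh /= eqxx.
Qed.

Lemma subrel_sym (P : {set {set V}}) (x y : V) : Defs.subrel P x y = Defs.subrel P y x.
Proof. by rewrite /Defs.subrel setUC. Qed.

Lemma comp_connect_sym (P : {set {set V}}) : connect_sym (Defs.subrel P).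
Proof. exact: sym_connect_sym (@subrel_sym P). Qed.

Lemma comp_self (P : {set {set V}}) (x : V) : x \in Defs.comp P x.
Proof. by rewrite inE connect0. Qed.

Lemma comp_edge (P : {set {set V}}) (x y : V) : Defs.subrel P x y -> y \in Defs.comp P x.
Proof. by move=> h; rewrite inE connect1. Qed.

Lemma comp_eq (P : {set {set V}}) (x y : V) :
  y \in Defs.comp P x -> Defs.comp P y = Defs.comp P x.
Proof.
rewrite inE => h; apply/setP => z; rewrite !inE.
by rewrite (same_connect (comp_connect_sym P) h z).
Qed.

Lemma comp_meet (P : {set {set V}}) (x y z : V) :
  z \in Defs.comp P x -> z \in Defs.comp P y -> Defs.comp P x = Defs.comp P y.
Proof. by move=> hx hy; rewrite -(comp_eq hx) (comp_eq hy). Qed.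

Lemma path_comp (P : {set {set V}}) (a b c : V) :
  Defs.subrel P a b -> Defs.subrel P b c ->
  (forall p q, p \in [set a; b; c] -> Defs.subrel P p q -> q \in [set a; b; c]) ->
  forall x, x \in [set a; b; c] -> Defs.comp P x = [set a; b; c].
Proof.
move=> hab hbc H x hx.
have cl : closed (Defs.subrel P) (mem [set a; b; c]).
  by apply: (intro_closed (comp_connect_sym P)) => p q hpq hp; apply: H hp hpq.
have ca z : z \in [set a; b; c] -> connect (Defs.subrel P) a z.
  case/set3_cases => ->; [exact: connect0 | exact: connect1 |].
  exact: connect_trans (connect1 hab) (connect1 hbc).
apply/setP => y; rewrite inE; apply/idP/idP => [hc|hy].
  by rewrite -(closed_connect cl hc).
apply: connect_trans (_ : connect (Defs.subrel P) x a) (ca y hy).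
by rewrite comp_connect_sym ca.
Qed.

Lemma alpha_inE (P : {set {set V}}) (x : V) : alpha_in P x = Defs.subrel P x (cross x).
Proof.
apply/existsP/idP => [[y /andP[/eqP hy]]|h]; last by exists (cross x); rewrite eqxx.
by have -> : y = cross x by apply: val_inj.
Qed.

Definition tri_share (P : {set {set V}}) (x : V) := #|Defs.comp P x :&: Tri e (base x)|.

Definition leaving (P : {set {set V}}) (x : V) :=
  Defs.subrel P x (cross x) && (tri_share P x == 1).
Definition entering (P : {set {set V}}) (x : V) :=
  Defs.subrel P x (cross x) && (tri_share P x == 2).

Lemma FdirE (P : {set {set V}}) (p : T * T) :
  (p \in Fdir P) = [exists x, (val x == p) && leaving P x].
Proof. by rewrite inE; apply: eq_existsb => x; rewrite alpha_inE. Qed.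

Lemma triangle_same_base (x y w : V) : Gadj x y -> Gadj y w -> Gadj x w ->
  y != w -> x != w -> base x = base y.
Proof.
move=> hxy hyw hxw nyw nxw.
have [_ [h|h]] := GadjP hxy => //.
have [_ [h1|h1]] := GadjP hxw; last by rewrite h1 -h eqxx in nyw.
have [_ [h2|h2]] := GadjP hyw; last by rewrite h2 h crossK eqxx in nxw.
by rewrite h1 h2.
Qed.

Lemma triangle_tri (Tr : {set V}) : triangle (@Gadj T e) Tr ->
  exists x : V, forall w : V, base w = base x -> w \in Tr.
Proof.
case=> hc hadj; have [x [y [z [U E]]]] := card3_set hc.
move: U => /= /and3P[]; rewrite !inE !negb_or => /andP[nxy nxz] nyz _.
have iX : x \in Tr by rewrite E !inE eqxx.
have iY : y \in Tr by rewrite E !inE eqxx orbT.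
have iZ : z \in Tr by rewrite E !inE eqxx !orbT.
have adj p q : p \in Tr -> q \in Tr -> p != q -> Gadj p q by move=> *; apply: hadj.
have exy : base x = base y := triangle_same_base (adj _ _ iX iY nxy) (adj _ _ iY iZ nyz)
  (adj _ _ iX iZ nxz) nyz nxz.
have exz : base x = base z := triangle_same_base (adj _ _ iX iZ nxz)
  (adj _ _ iZ iY (contra_neq esym nyz)) (adj _ _ iX iY nxy) (contra_neq esym nyz) nxy.
have [t [_ _ _ H]] := tri_third exy nxy.
exists x => w hw; case/or3P: (H w hw) => /eqP -> //.
case/or3P: (H z (esym exz)) => /eqP hz; [by rewrite hz eqxx in nxz | by rewrite hz eqxx in nyz |].
by rewrite -hz.
Qed.

Lemma cut_edge (X : {set V}) (a b : V) : Gadj a b -> a \in X -> b \notin X ->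
  [set a; b] \in edge_cut (@Gadj T e) X.
Proof.
move=> hab ha hb; rewrite inE; apply/andP; split.
  by rewrite inE; apply/existsP; exists a; apply/existsP; exists b; rewrite hab eqxx.
have -> : [set a; b] :&: X = [set a].
  apply/setP => w; rewrite !inE.
  case: (eqVneq w a) => [->|nwa]; first by rewrite ha.
  by case: (eqVneq w b) => [->|nwb] //=; rewrite (negbTE hb).
by rewrite cards1.
Qed.

Definition tri_closed (X : {set V}) := forall x y : V, base x = base y -> (x \in X) = (y \in X).

(** If the cut of X is a matching, X does not split any triangle: otherwise
    two cut edges of that triangle would share a vertex. *)
Lemma matching_cut_tri_closed (X : {set V}) :
  is_matching (edge_cut (@Gadj T e) X) -> tri_closed X.
Proof.
move=> hm.
suff split_tri x y : base x = base y -> x \in X -> y \notin X -> False.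
  move=> x y h; case: (boolP (x \in X)) => hx; case: (boolP (y \in X)) => hy //.
  - by case: (split_tri _ _ h hx hy).
  - by case: (split_tri _ _ (esym h) hy hx).
move=> h hx hy.
have nxy : x != y by apply: contraNneq hy => <-.
have [t [ht ntx nty _]] := tri_third h nxy.
have E1 := cut_edge (Gadj_tri h nxy) hx hy.
case: (boolP (t \in X)) => htX.
- have E2 := cut_edge (Gadj_tri (etrans ht h) nty) htX hy.
  have ne : [set x; y] != [set t; y].
    apply/negP => /eqP hh; have : x \in [set t; y] by rewrite -hh set21.
    by rewrite !inE (negbTE nxy) eq_sym (negbTE ntx).
  by have := disjointFr (hm _ _ E1 E2 ne) (set22 x y); rewrite set22.
- have E2 := cut_edge (Gadj_tri (esym ht) (contra_neq esym ntx)) hx htX.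
  have ne : [set x; y] != [set x; t].
    apply/negP => /eqP hh; have : y \in [set x; t] by rewrite -hh set22.
    by rewrite !inE eq_sym (negbTE nxy) eq_sym (negbTE nty).
  by have := disjointFr (hm _ _ E1 E2 ne) (set21 x y); rewrite set21.
Qed.

Section LambdaFactor.
Variable P : {set {set V}}.
Hypothesis HP : Lambda_factor (@Gadj T e) P.

Local Notation adj := (Defs.subrel P).
Local Notation comp := (Defs.comp P).
Local Notation leaving := (leaving P).
Local Notation entering := (entering P).
Local Notation tri_share := (tri_share P).

Lemma factor_edgeP (x y : V) : adj x y -> x != y /\ (base x = base y \/ y = cross x).
Proof.
move=> h; have := subsetP HP.1 _ h.
rewrite inE => /existsP[p /existsP[q /andP[hpq /eqP E]]].
have [npq H] := GadjP hpq.
have [[-> ->]|[-> ->]] := set2_inj E; first by [].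
split; first by rewrite eq_sym.
by case: H => [->|->]; [left | right; rewrite crossK].
Qed.

Lemma factor_nbr (x : V) : exists y, adj x y.
Proof.
case: (HP.2 x) => a [b [c [E _ hab hbc hac]]].
have : x \in [set a; b; c] by rewrite -E comp_self.
case/set3_cases => ->; [by exists b | by exists c | by exists b; rewrite subrel_sym].
Qed.

Lemma factor_comp (x y : V) : adj x y -> exists r,
  [/\ comp x = [set x; y; r], uniq [:: x; y; r] &
      (adj x r && ~~ adj y r) || (adj y r && ~~ adj x r)].
Proof.
move=> hxy; have [nxy _] := factor_edgeP hxy.
case: (HP.2 x) => a [b [c [E /and3P[nab nbc nac] hab hbc hac]]].
have hx : x \in [set a; b; c] by rewrite -E comp_self.
have hy : y \in [set a; b; c] by rewrite -E comp_edge.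
have hba : adj b a by rewrite subrel_sym.
have hca : ~~ adj c a by rewrite subrel_sym.
rewrite E; case/set3_cases: hx hxy nxy => ->; case/set3_cases: hy => ->;
  rewrite ?eqxx // => hxy _; rewrite ?hxy in hac hca => //.
- exists c; split; first by apply/setP => w; rewrite !inE; do ![case: eqP => _].
    by rewrite /= !inE negb_or nab nac nbc.
  by rewrite hbc (negbTE hac).
- exists c; split; first by apply/setP => w; rewrite !inE; do ![case: eqP => _].
    by rewrite /= !inE negb_or eq_sym nab nbc nac.
  by rewrite hbc (negbTE hac).
- exists a; split; first by apply/setP => w; rewrite !inE; do ![case: eqP => _].
    by rewrite /= !inE negb_or nbc eq_sym nab eq_sym nac.
  by rewrite hba (negbTE hca).
- exists a; split; first by apply/setP => w; rewrite !inE; do ![case: eqP => _].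
    by rewrite /= !inE negb_or eq_sym nbc eq_sym nac eq_sym nab.
  by rewrite hba (negbTE hca).
Qed.

Lemma alpha_comp (x : V) : adj x (cross x) -> exists r,
  [/\ comp x = [set x; cross x; r], uniq [:: x; cross x; r] &
   [&& base r == base x, adj x r, tri_share x == 2 & tri_share (cross x) == 1] ||
   [&& base r == base (cross x), adj (cross x) r, tri_share x == 1 & tri_share (cross x) == 2]].
Proof.
move=> h; case: (factor_comp h) => r [E U H]; exists r; split => //.
have Es : comp (cross x) = [set x; cross x; r] by rewrite (comp_eq (comp_edge h)).
move: (U) => /= /and3P[]; rewrite !inE negb_or => /andP[n1 n2] n3 _.
rewrite /tri_share Es E !card_set3I // !in_Tri eqxx /=.
have hx : ((sval x).1 == (sval x).2) = false by apply: negbTE (base_neq_target x).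
have hx' : ((sval x).2 == (sval x).1) = false by rewrite eq_sym.
case/orP: H => /andP[h1 h2].
- have [_ [hr|hr]] := factor_edgeP h1; last by rewrite hr eqxx in n3.
  by rewrite -hr /= hx hx' !eqxx h1.
- have [_ [hr|hr]] := factor_edgeP h1; last by rewrite hr crossK eqxx in n2.
  by rewrite -hr /= hx hx' !eqxx h1.
Qed.

Lemma leaving_or_entering (x : V) : adj x (cross x) -> leaving x || entering x.
Proof. by move=> h; rewrite /leaving /entering h; case: (alpha_comp h) => r [_ _ /orP[]/and4P[_ _ /eqP -> _]]. Qed.

Lemma leaving_cross (x : V) : leaving x -> entering (cross x).
Proof.
case/andP => h /eqP h1; case: (alpha_comp h) => r [_ _ /orP[]/and4P[_ _ /eqP h2 h3]].
  by rewrite h1 in h2.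
by rewrite /entering h3 crossK subrel_sym h.
Qed.

Lemma entering_cross (x : V) : entering x -> leaving (cross x).
Proof.
case/andP => h /eqP h1; case: (alpha_comp h) => r [_ _ /orP[]/and4P[_ _ /eqP h2 h3]];
  last by rewrite h1 in h2.
by rewrite /leaving h3 crossK subrel_sym h.
Qed.

Lemma leaving_not_entering (x : V) : leaving x -> ~~ entering x.
Proof. by case/andP => _ /eqP h; rewrite /entering h andbF. Qed.

Lemma entering_comp (x : V) : entering x -> exists r,
  [/\ comp x = [set x; cross x; r], uniq [:: x; cross x; r], base r = base x & adj x r].
Proof.
case/andP => h /eqP h1; case: (alpha_comp h) => r [E U /orP[]/and4P[/eqP h2 h3 h4 h5]].
  by exists r.
by rewrite h1 in h4.
Qed.

Lemma entering_unique (x x' : V) : entering x -> entering x' -> base x = base x' -> x = x'.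
Proof.
move=> hx hx' hu; apply/eqP/negPn/negP => nx.
have [r [E U hr hxr]] := entering_comp hx.
have nxr : x != r by move: U => /= /and3P[]; rewrite !inE negb_or => /andP[].
have [t [ht ntx ntr H]] := tri_third (esym hr) nxr.
case/or3P: (H x' (esym hu)) => /eqP hx'e; first by rewrite hx'e eqxx in nx.
- (* x' = r would put the alpha-partner of x' in the component of x *)
  have hx'c : x' \in comp x by rewrite E hx'e !inE eqxx orbT.
  have : cross x' \in comp x by rewrite -(comp_eq hx'c) comp_edge //; case/andP: hx'.
  rewrite E; case/set3_cases => hh.
  + by move: (cross_other_tri (esym hu)); rewrite hh eqxx.
  + by move: nx; rewrite (cross_inj hh) eqxx.
  + by move: (cross_neq x'); rewrite hh hx'e eqxx.
- (* x' = t: the triangle partner of x' must be x or r *)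
  have [r' [E' U' hr' hxr']] := entering_comp hx'.
  have nr't : r' != x' by move: U' => /= /and3P[]; rewrite !inE negb_or => /andP[_]; rewrite eq_sym.
  have hr'c : r' \in comp x.
    case/or3P: (H r' (etrans hr' (esym hu))) => /eqP hh; rewrite hh ?E ?inE ?eqxx ?orbT //.
    by move: nr't; rewrite hh hx'e eqxx.
  have : x' \in comp x by rewrite (comp_meet hr'c (comp_edge hxr')) comp_self.
  rewrite E; case/set3_cases => hh.
  + by rewrite hh eqxx in nx.
  + by move: (cross_other_tri hu); rewrite hh eqxx.
  + by move: ntr; rewrite -hx'e hh eqxx.
Qed.

(** Local fact: the triangle of an entering vertex contains a leaving vertex,
    namely its third vertex t, whose only possible P-neighbour is cross t. *)
Lemma entering_has_leaving (x : V) : entering x -> exists t, base t = base x /\ leaving t.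
Proof.
move=> hx; have [r [E U hr hxr]] := entering_comp hx.
have nxr : x != r by move: U => /= /and3P[]; rewrite !inE negb_or => /andP[].
have [t [ht ntx ntr H]] := tri_third (esym hr) nxr.
exists t; split => //.
have t_out : t \notin comp x.
  by rewrite E !inE !negb_or ntx ntr /= andbT eq_sym cross_other_tri.
have t_nbr w : adj t w -> w = cross t.
  move=> hw; have [ntw [hu|//]] := factor_edgeP hw.
  have hwx : w \in comp x.
    case/or3P: (H w (etrans (esym hu) ht)) => /eqP hw'; rewrite hw' ?comp_self ?E ?inE ?eqxx ?orbT //.
    by rewrite hw' eqxx in ntw.
  by move: t_out; rewrite (comp_meet hwx (comp_edge hw)) comp_self.
have [w hw] := factor_nbr t.
have ha : adj t (cross t) by rewrite -(t_nbr _ hw).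
case/orP: (leaving_or_entering ha) => // hit.
have [r' [_ _ hr' htr']] := entering_comp hit.
by move: (cross_other_tri (esym hr')); rewrite -(t_nbr _ htr') eqxx.
Qed.

(** Global count: alpha-partners exchange entering and leaving vertices. *)
Lemma card_entering_leaving : #|[set x | entering x]| = #|[set x | leaving x]|.
Proof.
have -> : [set x | leaving x] = cross @: [set x | entering x].
  apply/setP => t; rewrite inE; apply/idP/imsetP => [h|[x hx ->]].
    by exists (cross t); rewrite ?crossK // inE leaving_cross.
  by rewrite inE in hx; rewrite entering_cross.
by rewrite card_imset //; apply: cross_inj.
Qed.

Definition exit_of (x : V) := odflt x [pick t | leaving t && (base t == base x)].

Lemma exit_ofP (x : V) : entering x -> leaving (exit_of x) /\ base (exit_of x) = base x.
Proof.
move=> hx; rewrite /exit_of; case: pickP => [t /andP[h /eqP h'] | none] //=.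
have [t [h2 h1]] := entering_has_leaving hx; by move: (none t); rewrite h2 h1 eqxx.
Qed.

Lemma exit_of_inj : {in [set x | entering x] &, injective exit_of}.
Proof.
move=> x y; rewrite !inE => hx hy hxy.
by apply: entering_unique => //; rewrite -(exit_ofP hx).2 hxy (exit_ofP hy).2.
Qed.

(** By counting, [exit_of] maps the entering vertices onto the leaving ones. *)
Lemma exit_of_onto (t : V) : leaving t -> exists x, [/\ entering x, base x = base t & exit_of x = t].
Proof.
move=> ht.
have E : exit_of @: [set x | entering x] = [set x | leaving x].
  apply/eqP; rewrite eqEcard card_in_imset ?card_entering_leaving; last exact: exit_of_inj.
  rewrite leqnn andbT; apply/subsetP => z /imsetP[x].
  by rewrite !inE => hx ->; case: (exit_ofP hx).
have : t \in exit_of @: [set x | entering x] by rewrite E inE.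
case/imsetP => x; rewrite inE => hx ->; exists x; split => //.
by rewrite (exit_ofP hx).2.
Qed.

Lemma leaving_unique (t t' : V) : leaving t -> leaving t' -> base t = base t' -> t = t'.
Proof.
move=> h h' hu; have [x [hx hxu <-]] := exit_of_onto h; have [x' [hx' hxu' <-]] := exit_of_onto h'.
by rewrite (entering_unique hx hx') // hxu hxu' hu.
Qed.

Lemma leaving_has_entering (t : V) : leaving t -> exists x, entering x /\ base x = base t.
Proof. by move=> h; have [x [hx hxu _]] := exit_of_onto h; exists x. Qed.

(** u is active when T_u has a leaving vertex x; then [succ u] is the far end
    of x, i.e. the head of the arc of F(P,G) leaving u. *)
Definition active (u : T) := [exists x, leaving x && (base x == u)].
Definition succ (u : T) :=
  if [pick x | leaving x && (base x == u)] is Some x then target x else u.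

Lemma succP (u : T) (x : V) : leaving x -> base x = u -> succ u = target x.
Proof.
move=> hx hxu; rewrite /succ; case: pickP => [y /andP[hy /eqP hyu]|none].
  by rewrite (leaving_unique hy hx) // hyu hxu.
by move: (none x); rewrite hx hxu eqxx.
Qed.

Lemma succ_inactive (u : T) : ~~ active u -> succ u = u.
Proof.
move=> h; rewrite /succ; case: pickP => [y hy|//].
by move: h; rewrite /active; case/existsP; exists y.
Qed.

Lemma activeP (u : T) : active u -> exists x, [/\ leaving x, base x = u & succ u = target x].
Proof. by case/existsP => x /andP[hx /eqP hxu]; exists x; rewrite (succP hx hxu). Qed.

(** The arc leaving u enters [succ u], which is therefore active as well. *)
Lemma active_succ (u : T) : active u -> active (succ u).
Proof.
case/activeP => x [hx hxu ->].
have [t [htu ht]] := entering_has_leaving (leaving_cross hx).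
by apply/existsP; exists t; rewrite ht htu /= eqxx.
Qed.

(** Injectivity of [succ]: two arcs entering the same triangle would give it
    two entering vertices. *)
Lemma succ_inj : injective succ.
Proof.
have key u1 u2 : active u1 -> ~~ active u2 -> succ u1 <> succ u2.
  move=> /activeP[x [hx hxu ->]] h2; rewrite (succ_inactive h2) => hh.
  have [t [htu ht]] := entering_has_leaving (leaving_cross hx).
  by move: h2; rewrite /active; case/existsP; exists t; rewrite ht htu /= hh.
move=> u1 u2 h.
case: (boolP (active u1)) => a1; case: (boolP (active u2)) => a2.
- have [x1 [h1 hu1 hs1]] := activeP a1; have [x2 [h2 hu2 hs2]] := activeP a2.
  have := entering_unique (leaving_cross h1) (leaving_cross h2).
  rewrite /= -hs1 -hs2 h => /(_ erefl) /cross_inj hx.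
  by rewrite -hu1 -hu2 hx.
- by case: (key _ _ a1 a2 h).
- by case: (key _ _ a2 a1 (esym h)).
- by rewrite -(succ_inactive a1) -(succ_inactive a2).
Qed.

Lemma Fdir_arc (u z : T) : ((u, z) \in Fdir P) = active u && (succ u == z).
Proof.
rewrite FdirE; apply/existsP/andP => [[x /andP[/eqP hx ho]]|[ha /eqP hs]].
  have hxu : base x = u by rewrite hx.
  split; first by apply/existsP; exists x; rewrite ho hxu eqxx.
  by rewrite (succP ho hxu) hx.
have [x [ho hxu hs']] := activeP ha.
by exists x; rewrite ho andbT vtri_pair hxu -hs' hs.
Qed.

Lemma active_orbit u y : active u -> y \in orbit succ u -> active y.
Proof. by move=> h /trajectP[i _ ->]; elim: i => //= i; apply: active_succ. Qed.

(** The cycles of F(P,G) have length at least 3: no loops since B has none,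
    no 2-cycles since the alpha-partner of a leaving vertex is entering. *)
Lemma active_orbit_size u : active u -> 3 <= size (orbit succ u).
Proof.
move=> ha; have [x [hx hxu hs]] := activeP ha.
have [y [hy hyu hs2]] := activeP (active_succ ha).
have n1 v : active v -> succ v != v.
  by case/activeP => w [_ <- ->]; rewrite eq_sym base_neq_target.
have n2 : succ (succ u) != u.
  rewrite hs2; apply/eqP => hh.
  have hyx : y = cross x by apply: vtri_eq; rewrite /= ?hyu ?hs // hh hxu.
  by move: (leaving_not_entering hy); rewrite hyx leaving_cross.
have U : uniq [:: u; succ u; succ (succ u)].
  by rewrite /= !inE !negb_or eq_sym n1 // eq_sym n2 eq_sym n1 // active_succ.
apply: (uniq_leq_size U) => z; rewrite !inE -fconnect_orbit => /or3P[]/eqP ->.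
- exact: connect0.
- exact: fconnect1.
- exact: connect_trans (fconnect1 _ _) (fconnect1 _ _).
Qed.

(** (a1.1) F(P,G) is the union of the succ-orbits of the active vertices. *)
Lemma Fdir_cycle_dipacking : cycle_dipacking e (Fdir P).
Proof.
split.
  move=> x y; rewrite Fdir_arc => /andP[ha /eqP hs].
  by have [z [hz hzu hs']] := activeP ha; rewrite -hs hs' -hzu vtri_edge.
move=> x [y hy].
have ha : active x.
  by case/orP: hy; rewrite Fdir_arc => /andP[ha /eqP hs] //; rewrite -hs active_succ.
exists (orbit succ x); split; [exact: orbit_uniq | exact: active_orbit_size | exact: in_orbit |].
move=> y0 hy0 z; have cyc := cycle_orbit succ_inj x.
have hn : next (orbit succ x) y0 = succ y0 := esym (eqP (next_cycle cyc hy0)).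
split; first by rewrite Fdir_arc (active_orbit ha hy0) hn eq_sym.
set p := prev (orbit succ x) y0.
have hp : p \in orbit succ x by rewrite mem_prev.
have hsp : succ p = y0 by rewrite (eqP (next_cycle cyc hp)) next_prev ?orbit_uniq.
rewrite Fdir_arc; apply/andP/eqP => [[_ /eqP hz]|->].
  by apply: succ_inj; rewrite hz hsp.
by rewrite (active_orbit ha hp) hsp eqxx.
Qed.

(** Every triangle T_u contains a P-edge: the one at the entering vertex if u
    is active, and otherwise any P-edge at a vertex of T_u. *)
Lemma tri_factor_edge (x : V) : exists y z, [/\ base y = base x, base z = base x & adj y z].
Proof.
case: (boolP (adj x (cross x))) => ha.
  case/orP: (leaving_or_entering ha) => h.
    have [x' [hx' hu]] := leaving_has_entering h; have [r [_ _ hr hxr]] := entering_comp hx'.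
    by exists x', r; split => //; rewrite hr hu.
  by have [r [_ _ hr hxr]] := entering_comp h; exists x, r.
have [w hw] := factor_nbr x; have [_ [hu|hu]] := factor_edgeP hw; first by exists x, w.
by rewrite -hu hw in ha.
Qed.

Lemma triangle_factor_edge (Tr : {set V}) : triangle (@Gadj T e) Tr ->
  exists2 E, E \in P & E \subset Tr.
Proof.
case/triangle_tri => x sub; have [a [b [ha hb hab]]] := tri_factor_edge x.
exists [set a; b] => //.
by apply/subsetP => w /set2P[]->; apply: sub.
Qed.

Definition crossing (X : {set V}) : {set V} :=
  [set x | [&& x \in X, cross x \notin X & adj x (cross x)]].

Lemma cut_factor_card (X : {set V}) : tri_closed X ->
  #|edge_cut (@Gadj T e) X :&: P| = #|crossing X|.
Proof.
move=> hX.
have -> : edge_cut (@Gadj T e) X :&: P = (fun x => [set x; cross x]) @: crossing X.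
  apply/setP => E; apply/idP/imsetP => [|[x]]; last first.
    by rewrite inE => /and3P[hx hsx ha] ->; rewrite inE cut_edge ?Gadj_cross.
  rewrite !inE => /andP[/andP[hE hc] hP].
  case/existsP: hE => p /existsP[q /andP[hpq /eqP hE]]; subst E.
  have [npq hsw] := GadjP hpq; rewrite card_set2I // in hc.
  have hqs : q = cross p by case: hsw => // hh; move: hc; rewrite (hX _ _ hh); case: (q \in X).
  case: (boolP (p \in X)) hc => hp; case: (boolP (q \in X)) => hq //= _.
  + by exists p; rewrite ?hqs // inE hp -hqs hq.
  + exists q; last by rewrite hqs crossK setUC.
    by rewrite inE hq hqs crossK hp /= subrel_sym -hqs.
rewrite card_in_imset // => x y; rewrite !inE => /and3P[hx hsx _] /and3P[hy hsy _] hh.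
have : y \in [set x; cross x] by rewrite hh set21.
by case/set2P => // hyx; move: hsx; rewrite -hyx hy.
Qed.

Lemma card_entering_leaving_in (X : {set V}) : tri_closed X ->
  #|[set x in X | entering x]| = #|[set x in X | leaving x]|.
Proof.
move=> hX; have -> : [set x in X | leaving x] = exit_of @: [set x in X | entering x].
  apply/setP => t; rewrite inE; apply/andP/imsetP => [[htX ht]|[x hx ->]].
    have [x [hx hxu hpx]] := exit_of_onto ht.
    by exists x => //; rewrite inE hx (hX _ _ hxu) htX.
  move: hx; rewrite inE => /andP[hxX hx].
  by have [h1 h2] := exit_ofP hx; rewrite h1 (hX _ _ h2).
rewrite card_in_imset // => x y; rewrite !inE => /andP[_ hx] /andP[_ hy].
by apply: exit_of_inj; rewrite inE.
Qed.

(** Alpha-edges of P with both ends in X pair leaving with entering vertices. *)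
Lemma card_inner_leaving_entering (X : {set V}) :
  #|[set x in X | leaving x] :&: [set x | cross x \in X]| =
  #|[set x in X | entering x] :&: [set x | cross x \in X]|.
Proof.
have -> : [set x in X | leaving x] :&: [set x | cross x \in X] =
          cross @: ([set x in X | entering x] :&: [set x | cross x \in X]).
  apply/setP => t; rewrite !inE; apply/idP/imsetP => [/andP[/andP[htX ht] hs]|[x hx ->]].
    by exists (cross t); rewrite ?crossK // !inE crossK htX hs leaving_cross.
  by move: hx; rewrite !inE crossK => /andP[/andP[hxX hx] hs]; rewrite hs hxX entering_cross.
by rewrite card_imset //; apply: cross_inj.
Qed.

Lemma crossing_balanced (X : {set V}) : tri_closed X ->
  #|crossing X :&: [set x | leaving x]| = #|crossing X :\: [set x | leaving x]|.
Proof.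
move=> hX; set S := [set x | cross x \in X].
have eL : crossing X :&: [set x | leaving x] = [set x in X | leaving x] :\: S.
  apply/setP => x; rewrite !inE; apply/idP/idP.
    by case/andP => /and3P[-> -> _] ->.
  by case/andP => hs /andP[hx hl]; rewrite hx hs hl; case/andP: hl => ->.
have eE : crossing X :\: [set x | leaving x] = [set x in X | entering x] :\: S.
  apply/setP => x; rewrite !inE; apply/idP/idP.
    case/andP => hl /and3P[hx hs ha]; rewrite hx hs /=.
    by case/orP: (leaving_or_entering ha) => // h; rewrite h in hl.
  case/and3P => hs hx hi; rewrite hx hs (negbTE (contraL (@leaving_not_entering x) hi)).
  by case/andP: hi.
apply/eqP; rewrite eL eE -(eqn_add2l #|[set x in X | leaving x] :&: S|) cardsID.
by rewrite card_inner_leaving_entering cardsID card_entering_leaving_in.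
Qed.

Lemma blockade3_factor_even (K : {set {set V}}) : blockade (@Gadj T e) K -> #|K| = 3 ->
  (#|K :&: P| == 0) || (#|K :&: P| == 2).
Proof.
case=> [[X ->] hm] hK; have hX := matching_cut_tri_closed hm.
have hle : #|edge_cut (@Gadj T e) X :&: P| <= 3 by rewrite -hK subset_leq_card ?subsetIl.
rewrite cut_factor_card // -(cardsID [set x | leaving x] (crossing X)) in hle *.
rewrite -crossing_balanced // in hle *.
by move: hle; case: #|_ :&: _| => [|[|n]] //; rewrite !addSn !addnS.
Qed.

End LambdaFactor.

Section Realisation.
Variable D : {set T * T}.
Hypothesis HD : cycle_dipacking e D.

Definition covered u := [exists v, ((u, v) \in D) || ((v, u) \in D)].
Definition dsucc u := odflt u [pick w | (u, w) \in D].
Definition dpred u := odflt u [pick v | (v, u) \in D].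

(** On its cycle, u has exactly one out-arc and one in-arc, and
    [dpred u] differs from [dsucc u] since cycles have length >= 3. *)
Lemma coveredP u : covered u -> [/\ forall z, ((u, z) \in D) = (z == dsucc u),
  forall z, ((z, u) \in D) = (z == dpred u) & dpred u != dsucc u].
Proof.
move=> hu; have [s [U hs us H]] : exists s : seq T, [/\ uniq s, 3 <= size s, u \in s &
      forall y, y \in s -> forall z,
        (((y, z) \in D) = (z == next s y)) /\ (((z, y) \in D) = (z == prev s y))].
  by apply: HD.2; case/existsP: hu => v hv; exists v.
have out z := (H u us z).1; have inc z := (H u us z).2.
have -> : dsucc u = next s u.
  rewrite /dsucc; case: pickP => [w|none] /=; first by rewrite out => /eqP.
  by move: (none (next s u)); rewrite out eqxx.
have -> : dpred u = prev s u.
  rewrite /dpred; case: pickP => [w|none] /=; first by rewrite inc => /eqP.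
  by move: (none (prev s u)); rewrite inc eqxx.
by split => //; rewrite eq_sym next_prev_neq.
Qed.

Lemma uncovered_arcs u z : ~~ covered u -> ((u, z) \in D) = false /\ ((z, u) \in D) = false.
Proof.
move=> h; split; apply/negbTE; apply: contra h => hz; apply/existsP; exists z;
  by rewrite hz ?orbT.
Qed.

Lemma covered_succ u : covered u -> covered (dsucc u) /\ dpred (dsucc u) = u.
Proof.
move=> hu; have [out _ _] := coveredP hu.
have hD : (u, dsucc u) \in D by rewrite out.
have hs : covered (dsucc u) by apply/existsP; exists u; rewrite hD orbT.
by split => //; have [_ inc _] := coveredP hs; apply/esym/eqP; rewrite -inc.
Qed.

Lemma covered_pred u : covered u -> covered (dpred u) /\ dsucc (dpred u) = u.
Proof.
move=> hu; have [_ inc _] := coveredP hu.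
have hD : (dpred u, u) \in D by rewrite inc.
have hp : covered (dpred u) by apply/existsP; exists u; rewrite hD.
by split => //; have [out _ _] := coveredP hp; apply/esym/eqP; rewrite -out.
Qed.

Lemma edge_pred u : covered u -> e u (dpred u).
Proof. by move=> hu; rewrite e_sym; apply: HD.1; have [_ inc _] := coveredP hu; rewrite inc. Qed.

(** The P-edges inside T_u all contain its hub x: for u on D the vertex
    towards dpred u, joined only to the vertex not towards dsucc u; for u
    off D a fixed vertex, joined to the two others. *)
Definition hub_edge (x y : V) :=
  if covered (base x) then (target x == dpred (base x)) && (target y != dsucc (base x))
  else [pick z | base z == base x] == Some x.

Definition realising (x y : V) :=
  ((y == cross x) && (val x \in D)) || [&& base x == base y, x != y & hub_edge x y].
Definition realisation : {set {set V}} :=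
  [set E | [exists x, exists y, realising x y && (E == [set x; y])]].

Local Notation radj := (Defs.subrel realisation).
Local Notation rcomp := (Defs.comp realisation).

Lemma realisationE (a b : V) : radj a b = realising a b || realising b a.
Proof.
rewrite /Defs.subrel inE; apply/existsP/orP => [[x /existsP[y /andP[hR /eqP E]]]|[h|h]].
- by case: (set2_inj E) => [[-> ->]|[-> ->]]; [left | right].
- by exists a; apply/existsP; exists b; rewrite h eqxx.
- by exists b; apply/existsP; exists a; rewrite h setUC eqxx.
Qed.

Lemma realisation_nbr (q r : V) : radj q r ->
  [\/ r = cross q /\ val q \in D, q = cross r /\ val r \in D,
      [/\ base q = base r, q != r & hub_edge q r] | [/\ base q = base r, q != r & hub_edge r q]].
Proof.
rewrite realisationE /realising.
case/orP => /orP[/andP[/eqP h1 h2]|/and3P[/eqP h1 h2 h3]].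
- by constructor 1.
- by constructor 3.
- by constructor 2.
- by constructor 4; split; rewrite // eq_sym.
Qed.

Section EntryTriangle.
(** For u on D, the triangle T_u consists of the entry vertex y towards
    dpred u, the vertex towards dsucc u, and a third vertex z. *)
Variables y z : V.
Hypotheses (y_cov : covered (base y)) (y_pred : target y = dpred (base y)).
Hypotheses (z_base : base z = base y) (z_ne : z != y) (z_succ : target z != dsucc (base y)).
Hypothesis z_third :
  forall w : V, base w = base y -> target w != dsucc (base y) -> w = y \/ w = z.

Lemma third_not_pred : target z != dpred (base y).
Proof. by apply: contra z_ne => /eqP h; apply/eqP; apply: vtri_eq; rewrite ?h. Qed.

Lemma entry_nbr q : radj y q -> q = cross y \/ q = z.
Proof.
case/realisation_nbr => [[-> _]|[-> _]|[hq nq hub]|[hq nq hub]]; first by left.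
- by left; rewrite crossK.
- move: hub; rewrite /hub_edge y_cov => /andP[_ hs].
  by case: (z_third (esym hq) hs) => hqv; [rewrite hqv eqxx in nq | right].
- move: hub; rewrite /hub_edge -hq y_cov => /andP[/eqP hp _].
  by move: nq; rewrite (@vtri_eq y q hq) ?eqxx // hp y_pred.
Qed.

Lemma third_nbr q : radj z q -> q = y.
Proof.
have [out inc _] := coveredP y_cov.
case/realisation_nbr => [[_ hD]|[hz hD]|[hq _ hub]|[hq _ hub]].
- by move: hD; rewrite vtri_pair z_base out (negbTE z_succ).
- have e1 : target q = base y by rewrite -z_base hz.
  have e2 : base q = target z by rewrite hz.
  by move: hD; rewrite vtri_pair e1 inc e2 (negbTE third_not_pred).
- by move: hub; rewrite /hub_edge z_base y_cov (negbTE third_not_pred).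
- move: hub; rewrite /hub_edge -hq z_base y_cov => /andP[/eqP hp _].
  by apply: vtri_eq; [rewrite -hq z_base | rewrite hp y_pred].
Qed.

Lemma cross_entry_nbr q : radj (cross y) q -> q = y.
Proof.
have [pcov psucc] := covered_pred y_cov.
case/realisation_nbr => [[-> _]|[hq _]|[_ _ hub]|[hq _ hub]].
- by rewrite crossK.
- exact: cross_inj.
- move: hub; rewrite /hub_edge /= y_pred pcov psucc => /andP[/eqP hp _].
  by have [_ _] := coveredP pcov; rewrite psucc -hp eqxx.
- by move: hub; rewrite /hub_edge -hq /= y_pred pcov psucc eqxx andbF.
Qed.

Lemma entry_path : [/\ radj (cross y) y, radj y z & ~~ radj (cross y) z].
Proof.
have [_ inc _] := coveredP y_cov.
split.
- by rewrite realisationE /realising crossK eqxx /= vtri_pair /= y_pred inc eqxx.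
- rewrite realisationE; apply/orP; left; rewrite /realising; apply/orP; right.
  by rewrite z_base eqxx eq_sym z_ne /hub_edge y_cov y_pred eqxx z_succ.
- by apply/negP => /cross_entry_nbr hz; move: z_ne; rewrite hz eqxx.
Qed.

Lemma entry_comp x : x \in [set cross y; y; z] -> rcomp x = [set cross y; y; z].
Proof.
have [h1 h2 _] := entry_path.
apply: path_comp => // p q /set3_cases[] -> hpq.
- by rewrite (cross_entry_nbr hpq) !inE eqxx orbT.
- by case: (entry_nbr hpq) => ->; rewrite !inE eqxx ?orbT.
- by rewrite (third_nbr hpq) !inE eqxx orbT.
Qed.

End EntryTriangle.

Lemma entry_component (y : V) : covered (base y) -> target y = dpred (base y) -> exists z,
  [/\ base z = base y,
      forall w, base w = base y -> target w != dsucc (base y) -> w = y \/ w = z,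
      uniq [:: cross y; y; z],
      [/\ radj (cross y) y, radj y z & ~~ radj (cross y) z] &
      forall x, x \in [set cross y; y; z] -> rcomp x = [set cross y; y; z]].
Proof.
move=> hu hp; have [out _ nps] := coveredP hu.
have hD : (base y, dsucc (base y)) \in D by rewrite out.
have [ys hys] := vtri_of_edge (HD.1 _ _ hD).
have hysu : base y = base ys by rewrite hys.
have nyys : y != ys by apply: contra nps => /eqP hh; rewrite -hp hh hys.
have [z [hz nzy nzys H]] := tri_third hysu nyys.
have hzs : target z != dsucc (base y).
  by apply: contra nzys => /eqP h; apply/eqP; apply: vtri_eq; rewrite ?hz ?hys ?h.
have third w : base w = base y -> target w != dsucc (base y) -> w = y \/ w = z.
  move=> hw hws; case/or3P: (H w hw) => /eqP hh; [by left | | by right].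
  by move: hws; rewrite hh hys eqxx.
exists z; split => //.
- by rewrite /= !inE !negb_or cross_neq (cross_other_tri (esym hz)) eq_sym nzy.
- by apply: entry_path.
- by apply: entry_comp.
Qed.

Lemma off_nbr (u : T) (m p q : V) : ~~ covered u -> [pick z | base z == u] = Some m ->
  base p = u -> radj p q -> [/\ base q = u, p != q & (p = m \/ q = m)].
Proof.
move=> hu hm hp; case/realisation_nbr => [[_ hD]|[hc hD]|[hq nq hub]|[hq nq hub]].
- by move: hD; rewrite vtri_pair hp (uncovered_arcs _ hu).1.
- have e1 : target q = u by rewrite -hp hc.
  by move: hD; rewrite vtri_pair e1 (uncovered_arcs _ hu).2.
- move: hub; rewrite /hub_edge hp (negbTE hu) hm => /eqP [->].
  by split; [rewrite -hq | | left].
- move: hub; rewrite /hub_edge -hq hp (negbTE hu) hm => /eqP [->].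
  by split; [ | | right].
Qed.

Lemma off_component (x0 : V) : ~~ covered (base x0) -> exists a b c,
  [/\ rcomp x0 = [set a; b; c], [&& a != b, b != c & a != c],
      radj a b, radj b c & ~~ radj a c].
Proof.
move=> hu; have [m hm hpick] : exists2 m : V, base m = base x0 & [pick z | base z == base x0] = Some m.
  case: pickP => [m /eqP hm | none]; first by exists m.
  by move: (none x0); rewrite eqxx.
have [a [ha nam]] := tri_other m.
have [c [hc ncm nca H]] := tri_third (esym ha) (contra_neq esym nam).
have hub_to w : base w = base m -> w != m -> radj m w.
  move=> hw nwm; rewrite realisationE; apply/orP; left; rewrite /realising; apply/orP; right.
  by rewrite hw eqxx eq_sym nwm /hub_edge hm (negbTE hu) hpick eqxx.
have hab : radj a m by rewrite subrel_sym hub_to.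
have hbc : radj m c by rewrite hub_to // hc.
have nac : a != c by rewrite eq_sym.
exists a, m, c; split => //.
- apply: path_comp => // [p q hp hpq|].
    have hpu : base p = base x0 by case/set3_cases: hp => ->; rewrite ?ha ?hc hm.
    have [hqu _ _] := off_nbr hu hpick hpu hpq.
    by case/or3P: (H q (etrans hqu (esym hm))) => /eqP ->; rewrite !inE eqxx ?orbT.
  by case/or3P: (H x0 (esym hm)) => /eqP ->; rewrite !inE eqxx ?orbT.
- by rewrite nam eq_sym ncm nac.
- apply/negP => hh; have [_ _ [h|h]] := off_nbr hu hpick (etrans ha hm) hh.
    by rewrite h eqxx in nam.
  by rewrite h eqxx in ncm.
Qed.

Lemma realisation_lambda : Lambda_factor (@Gadj T e) realisation.
Proof.
split.
  apply/subsetP => E; rewrite inE => /existsP[x /existsP[y /andP[hR /eqP ->]]].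
  rewrite inE; apply/existsP; exists x; apply/existsP; exists y; rewrite eqxx andbT.
  case/orP: hR => [/andP[/eqP -> _]|/and3P[/eqP h1 h2 _]]; [exact: Gadj_cross | exact: Gadj_tri].
move=> x0; case: (boolP (covered (base x0))) => hu; last exact: off_component.
have [y [hyc hyp hx0]] : exists y : V, [/\ covered (base y), target y = dpred (base y) &
    x0 = cross y \/ (base x0 = base y /\ target x0 != dsucc (base y))].
  case: (eqVneq (target x0) (dsucc (base x0))) => hs.
    have [hsc hsp] := covered_succ hu.
    by exists (cross x0); rewrite /= hs hsp crossK; split => //; left.
  have [y hy] := vtri_of_edge (edge_pred hu).
  have [hyu hyp] : base y = base x0 /\ target y = dpred (base x0) by rewrite hy.
  by exists y; rewrite hyu hyp; split => //; right.
have [z [hz third U [h1 h2 h3] Hc]] := entry_component hyc hyp.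
exists (cross y), y, z; split => //.
- apply: Hc; case: hx0 => [->|[hb hs]]; first by rewrite !inE eqxx.
  by case: (third _ hb hs) => ->; rewrite !inE eqxx ?orbT.
- by move: U => /= /and3P[]; rewrite !inE !negb_or => /andP[-> ->] -> _.
Qed.

Lemma entry_share (y : V) : covered (base y) -> target y = dpred (base y) ->
  tri_share realisation y = 2 /\ tri_share realisation (cross y) = 1.
Proof.
move=> hu hp; have [z [hz _ U _ Hc]] := entry_component hu hp.
have nyt : ((sval y).1 == (sval y).2) = false by apply: negbTE (base_neq_target y).
have nty : ((sval y).2 == (sval y).1) = false by rewrite eq_sym.
rewrite /tri_share (Hc y) ?(Hc (cross y)) ?inE ?eqxx ?orbT // !card_set3I // !in_Tri /=.
by rewrite hz nyt nty !eqxx.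
Qed.

Lemma realisation_Fdir : Fdir realisation = D.
Proof.
apply/setP => -[u v]; rewrite FdirE.
apply/existsP/idP => [[x /andP[/eqP hx /andP[hx_adj /eqP hshare]]]|hD].
  case: (realisation_nbr hx_adj) => [[_ hD]|[hxx /= hD]|[hb _ _]|[hb _ _]].
  - by rewrite -hx.
  - (* the reversed arc would make x the entry vertex of its triangle *)
    have hu : covered (base x) by apply/existsP; exists (target x); rewrite hD orbT.
    have [_ inc _] := coveredP hu.
    have hp : target x = dpred (base x) by apply/eqP; rewrite -inc.
    by move: hshare; rewrite (entry_share hu hp).1.
  - by case: (negP (cross_other_tri hb)); apply/eqP.
  - by case: (negP (cross_other_tri hb)); apply/eqP.
set x : V := exist _ (u, v) (HD.1 _ _ hD).
exists x; rewrite eqxx andTb.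
have hv : covered v by apply/existsP; exists u; rewrite hD orbT.
have [_ inc _] := coveredP hv.
have hp : u = dpred v by apply/eqP; rewrite -inc.
have [_] := entry_share (y := cross x) hv hp; rewrite crossK => share1.
by rewrite /leaving share1 eqxx andbT realisationE /realising eqxx hD.
Qed.

End Realisation.

End TriangleReplacement.

Theorem mainTheorem3 (T : finType) (e : rel T)
  (e_sym : symmetric e) (e_irr : irreflexive e)
  (B_cubic : cubic e) (B_3conn : k_connected 3 e)
  (B_no3blk : forall K : {set {set T}}, blockade e K -> #|K| <> 3) :
  (forall P : {set {set Vtri e}}, Lambda_factor (@Gadj T e) P ->
     [/\ cycle_dipacking e (Fdir P),
         (forall K : {set {set Vtri e}}, blockade (@Gadj T e) K -> #|K| = 3 ->
            (#|K :&: P| == 0) || (#|K :&: P| == 2)) &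
         (forall Tr : {set Vtri e}, triangle (@Gadj T e) Tr ->
            exists2 E, E \in P & E \subset Tr)]) /\
  (forall D : {set T * T}, cycle_dipacking e D ->
     exists P : {set {set Vtri e}}, Lambda_factor (@Gadj T e) P /\ Fdir P = D).
Proof.
split=> [P HP | D HD].
  split.
  - exact: Fdir_cycle_dipacking e_sym e_irr B_cubic P HP.
  - exact: blockade3_factor_even e_sym e_irr B_cubic P HP.
  - exact: triangle_factor_edge e_sym e_irr B_cubic P HP.
exists (realisation e_sym D); split.
- exact: realisation_lambda e_sym e_irr B_cubic D HD.
- exact: realisation_Fdir e_sym e_irr B_cubic D HD.
Qed.
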